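(* Let $v_1\ge v_2>0$, $m\in\mathbb{Z}_{\ge0}$ and $0<\beta\le\alpha<1$. A strategy profile $(X,Y)$ with $\mathbf{E}(X)=m+\alpha$ and $\mathbf{E}(Y)=m+\beta$ is a Nash equilibrium of the discrete all-pay auction with valuations $v_1,v_2$ if and only if $v_1/2=v_2/2=m+1$, $X=(1-\alpha)U_{\mathrm{E}}^m+\alpha U_{\mathrm{O}}^{m+1}$ and $Y=(1-\beta)U_{\mathrm{E}}^m+\beta U_{\mathrm{O}}^{m+1}$. In this case the equilibrium payoffs are $P^1(X,Y)=1-\beta$ and $P^2(Y,X)=1-\alpha$.
   Context: Discrete all-pay auction: two players, 1 and 2, value a prize at $v_1$ and $v_2$ respectively, where $v_1\ge v_2>0$. A (mixed) strategy is a probability distribution on $\mathbb{Z}_{\ge 0}$ with finite mean, identified with a $\mathbb{Z}_{\ge0}$-valued random variable; the two players' choices are independent. If player 1 uses $X$ and player 2 uses $Y$, the expected payoffs are $P^1(X,Y)=v_1\Pr(X>Y)+\frac{v_1}{2}\Pr(X=Y)-\mathbf{E}(X)$ and $P^2(Y,X)=v_2\Pr(Y>X)+\frac{v_2}{2}\Pr(X=Y)-\mathbf{E}(Y)$. A Nash equilibrium of the all-pay auction is a pair $(X,Y)$ with $P^1(X,Y)\ge P^1(X',Y)$ and $P^2(Y,X)\ge P^2(Y',X)$ for all strategies $X',Y'$. $\lambda A+(1-\lambda)B$ denotes the mixture of distributions $A$ and $B$. Special distributions: for $m\ge1$, $U_{\mathrm{O}}^m$ is the uniform distribution on $\{1,3,\dots,2m-1\}$;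 for $m\ge0$, $U_{\mathrm{E}}^m$ is the uniform distribution on $\{0,2,\dots,2m\}$. *)

From Stdlib Require Import Reals.
From Coquelicot Require Import Coquelicot.
Open Scope R_scope.

Definition is_strategy (p : nat -> R) : Prop :=
  (forall n, 0 <= p n) /\ is_series p 1 /\ ex_series (fun n => INR n * p n).

Definition mean (p : nat -> R) : R := Series (fun n => INR n * p n).

(* below q i = Pr(Y < i) = q 0 + ... + q (i-1) *)
Fixpoint below (q : nat -> R) (i : nat) : R :=
  match i with
  | O => 0
  | S k => below q k + q k
  end.

Definition prob_gt (p q : nat -> R) : R := Series (fun i => p i * below q i).

Definition prob_eq (p q : nat -> R) : R := Series (fun i => p i * q i).

Definition payoff (v : R) (p q : nat -> R) : R :=
  v * prob_gt p q + v / 2 * prob_eq p q - mean p.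

(* Nash equilibrium (X,Y) of the all-pay auction with valuations v1, v2:
   P^1(X,Y) = payoff v1 p q,  P^2(Y,X) = payoff v2 q p. *)
Definition nash (v1 v2 : R) (p q : nat -> R) : Prop :=
  is_strategy p /\ is_strategy q /\
  (forall p', is_strategy p' -> payoff v1 p' q <= payoff v1 p q) /\
  (forall q', is_strategy q' -> payoff v2 q' p <= payoff v2 q p).

Definition UO (m : nat) (n : nat) : R :=
  if andb (Nat.odd n) (Nat.ltb n (2 * m)) then / INR m else 0.

Definition UE (m : nat) (n : nat) : R :=
  if andb (Nat.even n) (Nat.leb n (2 * m)) then / INR (S m) else 0.

Definition mix (lam : R) (A B : nat -> R) : nat -> R :=
  fun n => lam * A n + (1 - lam) * B n.

(* Write [wins q n = 2 Pr(Y<n) + Pr(Y=n)] for twice the expected share of the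
   prize won by the bid [n] against [Y ~ q]; a payoff is then
   [v/2 * share - mean], and the two players' shares always add up to 2.

   "If": when [v1 = v2 = 2(m+1)], against [(1-b) U_E^m + b U_O^(m+1)] every
   bid in [0, 2m+1] earns [1-b] and every higher bid earns less, so both
   candidate strategies are best responses with the stated payoffs.

   "Only if": each player may deviate to the candidate strategy having the
   same mean as his own.  A summation-by-parts estimate bounds the share of
   such a deviation from below, with a bonus proportional to the opponent's
   mass above [2m+1]; since the shares add up to 2, both bonuses vanish and
   both deviations are optimal.  The deviations have full support on
   [0, 2m+1], so each opponent makes all these bids equally profitable; this
   forces consecutive masses to add up to [2/v], hence [v = 2(m+1)], and the
   mean then determines the opponent's strategy. *)
From Stdlib Require Import Reals.
From Coquelicot Require Import Coquelicot.
From Stdlib Require Import Lra Lia FunctionalExtensionality.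
Open Scope R_scope.

Lemma below_S (r : nat -> R) (n : nat) : below r (S n) = below r n + r n.
Proof. reflexivity. Qed.

Lemma below_sum_n (r : nat -> R) (n : nat) : below r (S n) = sum_n r n.
Proof.
  rewrite sum_n_Reals. induction n as [|n IH]; simpl; [ring|].
  rewrite <- IH. reflexivity.
Qed.

Lemma below_ext (r s : nat -> R) (n : nat) :
  (forall k, (k < n)%nat -> r k = s k) -> below r n = below s n.
Proof.
  induction n as [|n IH]; intros H; [reflexivity|].
  rewrite !below_S, IH, H; auto.
Qed.

Lemma below_minus (r s : nat -> R) (n : nat) :
  below (fun k => r k - s k) n = below r n - below s n.
Proof. induction n as [|n IH]; simpl; [ring|]. rewrite IH. ring. Qed.

Lemma below_scal (c : R) (r : nat -> R) (n : nat) :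
  below (fun k => c * r k) n = c * below r n.
Proof. induction n as [|n IH]; simpl; [ring|]. rewrite IH. ring. Qed.

Lemma below_nonneg (r : nat -> R) (n : nat) :
  (forall k, (k < n)%nat -> 0 <= r k) -> 0 <= below r n.
Proof.
  induction n as [|n IH]; intros H; simpl; [lra|].
  assert (0 <= below r n) by (apply IH; intros; apply H; lia).
  assert (0 <= r n) by (apply H; lia). lra.
Qed.

Lemma below_zero_each (r : nat -> R) (n : nat) :
  (forall k, (k < n)%nat -> 0 <= r k) -> below r n = 0 ->
  forall k, (k < n)%nat -> r k = 0.
Proof.
  induction n as [|n IH]; intros Hpos Hzero k Hk; [lia|].
  rewrite below_S in Hzero.
  assert (0 <= below r n) by (apply below_nonneg; intros; apply Hpos; lia).
  assert (0 <= r n) by (apply Hpos; lia).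
  destruct (Nat.eq_dec k n) as [->|Hne]; [lra|].
  apply IH; [intros; apply Hpos; lia | lra | lia].
Qed.

Lemma below_stable (r : nat -> R) (K n : nat) :
  (forall k, (K <= k)%nat -> r k = 0) -> (K <= n)%nat -> below r n = below r K.
Proof.
  intros Hr Hn. induction n as [|n IH].
  - replace K with 0%nat by lia. reflexivity.
  - destruct (Nat.eq_dec K (S n)) as [->|Hne]; [reflexivity|].
    rewrite below_S, IH, Hr by lia. ring.
Qed.

Lemma is_series_finite (r : nat -> R) (K : nat) :
  (forall k, (K <= k)%nat -> r k = 0) -> is_series r (below r K).
Proof.
  intros Hr. change (is_lim_seq (sum_n r) (below r K)).
  apply is_lim_seq_ext_loc with (u := fun _ => below r K).
  - exists K. intros n Hn. rewrite <- below_sum_n.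
    symmetry. apply below_stable; auto.
  - apply is_lim_seq_const.
Qed.

Lemma Series_finite (r : nat -> R) (K : nat) :
  (forall k, (K <= k)%nat -> r k = 0) -> Series r = below r K.
Proof. intros Hr. apply is_series_unique, is_series_finite, Hr. Qed.

Lemma ex_series_finite (r : nat -> R) (K : nat) :
  (forall k, (K <= k)%nat -> r k = 0) -> ex_series r.
Proof. intros Hr. exists (below r K). apply is_series_finite, Hr. Qed.

Lemma ex_series_scal_R (c : R) (a : nat -> R) :
  ex_series a -> ex_series (fun n => c * a n).
Proof. exact (@ex_series_scal_l R_AbsRing R_NormedModule c a). Qed.

Lemma ex_series_minus_R (a b : nat -> R) :
  ex_series a -> ex_series b -> ex_series (fun n => a n - b n).
Proof. exact (@ex_series_minus R_AbsRing R_NormedModule a b). Qed.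

Lemma Series_nonneg (a : nat -> R) :
  (forall n, 0 <= a n) -> ex_series a -> 0 <= Series a.
Proof.
  intros Ha He.
  assert (Hzero : Series (fun _ : nat => 0) = 0)
    by (apply (Series_finite _ 0); reflexivity).
  rewrite <- Hzero.
  apply Series_le; auto. intros n. split; [lra | apply Ha].
Qed.

Lemma Series_split (a : nat -> R) (K : nat) :
  ex_series a -> Series a = below a K + Series (fun k => a (K + k)%nat).
Proof.
  intros He. destruct K as [|K].
  - simpl. rewrite Rplus_0_l. reflexivity.
  - rewrite (Series_incr_n a (S K)), below_sum_n, sum_n_Reals by (auto; lia).
    reflexivity.
Qed.

Lemma tail_zero (a : nat -> R) (K : nat) :
  (forall n, 0 <= a n) -> ex_series a -> Series a = below a K ->
  forall k, (K <= k)%nat -> a k = 0.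
Proof.
  intros Ha He Hsum k Hk.
  set (t := fun j => a (K + j)%nat).
  assert (Ht : ex_series t) by (apply (ex_series_incr_n a K), He).
  assert (Hzero : Series t = 0).
  { pose proof (Series_split a K He). unfold t. lra. }
  assert (Hpart : below t (S (k - K)) <= 0).
  { rewrite <- Hzero, (Series_split t (S (k - K)) Ht).
    assert (0 <= Series (fun j => t (S (k - K) + j)%nat)).
    { apply Series_nonneg; [intros; apply Ha | apply (ex_series_incr_n t), Ht]. }
    lra. }
  rewrite below_S in Hpart.
  assert (0 <= below t (k - K)) by (apply below_nonneg; intros; apply Ha).
  pose proof (Ha (K + (k - K))%nat).
  replace k with (K + (k - K))%nat by lia. unfold t in *. lra.
Qed.

Lemma below_le_Series (a : nat -> R) (K : nat) :
  (forall n, 0 <= a n) -> ex_series a -> below a K <= Series a.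
Proof.
  intros Ha He. rewrite (Series_split a K He).
  assert (0 <= Series (fun k => a (K + k)%nat)).
  { apply Series_nonneg; [intros; apply Ha | apply (ex_series_incr_n a K), He]. }
  lra.
Qed.

Lemma strategy_ex_series (q : nat -> R) : is_strategy q -> ex_series q.
Proof. intros [_ [Hq _]]. exists 1. exact Hq. Qed.

Lemma strategy_mass (q : nat -> R) : is_strategy q -> Series q = 1.
Proof. intros [_ [Hq _]]. apply is_series_unique, Hq. Qed.

Lemma strategy_below_le1 (q : nat -> R) (n : nat) :
  is_strategy q -> 0 <= below q n <= 1.
Proof.
  intros Hq. split.
  - apply below_nonneg. intros. apply (proj1 Hq).
  - rewrite <- (strategy_mass q Hq).
    apply below_le_Series; [apply (proj1 Hq) | apply strategy_ex_series, Hq].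
Qed.

Lemma strategy_finite (r : nat -> R) (K : nat) :
  (forall k, 0 <= r k) -> (forall k, (K <= k)%nat -> r k = 0) ->
  below r K = 1 -> is_strategy r.
Proof.
  intros Hpos Hsupp Hmass. split; [exact Hpos|]. split.
  - rewrite <- Hmass. apply is_series_finite, Hsupp.
  - apply (ex_series_finite _ K). intros k Hk. rewrite Hsupp by exact Hk. ring.
Qed.

Lemma strategy_tail_zero (q : nat -> R) (K : nat) :
  is_strategy q -> below q K = 1 -> forall k, (K <= k)%nat -> q k = 0.
Proof.
  intros Hq HK. apply tail_zero; [apply (proj1 Hq) | apply strategy_ex_series, Hq |].
  rewrite strategy_mass, HK by exact Hq. reflexivity.
Qed.

Lemma ex_series_bounded (p f : nat -> R) (c : R) :
  is_strategy p -> (forall n, Rabs (f n) <= c) -> ex_series (fun n => p n * f n).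
Proof.
  intros Hp Hf.
  apply (@ex_series_le R_AbsRing R_CompleteNormedModule _ (fun n => c * p n)).
  - intros n. change (Rabs (p n * f n) <= c * p n).
    rewrite Rabs_mult, Rabs_pos_eq by apply (proj1 Hp).
    pose proof (proj1 Hp n). pose proof (Hf n). nra.
  - apply ex_series_scal_R, strategy_ex_series, Hp.
Qed.

(* The prize is shared: bid [n] against [Y ~ q] wins it with
   probability [Pr(Y < n)] and half of it with probability [Pr(Y = n)], so
   [wins q n = 2 Pr(Y < n) + Pr(Y = n)] is twice its expected share, and
   [share p q] is the same quantity for a mixed bid [X ~ p]. *)

Definition wins (q : nat -> R) (n : nat) : R := below q n + below q (S n).

Definition share (p q : nat -> R) : R := 2 * prob_gt p q + prob_eq p q.

Definition pure_payoff (v : R) (q : nat -> R) (n : nat) : R :=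
  v / 2 * wins q n - INR n.

Lemma payoff_share (v : R) (p q : nat -> R) :
  payoff v p q = v / 2 * share p q - mean p.
Proof. unfold payoff, share. field. Qed.

Lemma share_series (p q : nat -> R) :
  is_strategy p -> is_strategy q -> share p q = Series (fun n => p n * wins q n).
Proof.
  intros Hp Hq.
  assert (Hgt : ex_series (fun n => p n * below q n)).
  { apply (ex_series_bounded _ _ 1 Hp). intros n.
    pose proof (strategy_below_le1 q n Hq). rewrite Rabs_pos_eq; lra. }
  assert (Heq : ex_series (fun n => p n * q n)).
  { apply (ex_series_bounded _ _ 1 Hp). intros n.
    pose proof (strategy_below_le1 q n Hq). pose proof (strategy_below_le1 q (S n) Hq).
    rewrite below_S in *. pose proof (proj1 Hq n). rewrite Rabs_pos_eq; lra. }
  unfold share, prob_gt, prob_eq.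
  rewrite <- Series_scal_l, <- Series_plus by (try apply ex_series_scal_R; assumption).
  apply Series_ext. intros n. unfold wins. rewrite below_S. ring.
Qed.

Lemma payoff_series (v : R) (p q : nat -> R) :
  is_strategy p -> is_strategy q ->
  payoff v p q = Series (fun n => p n * pure_payoff v q n) /\
  ex_series (fun n => p n * pure_payoff v q n).
Proof.
  intros Hp Hq.
  assert (Hwins : ex_series (fun n => p n * wins q n)).
  { apply (ex_series_bounded _ _ 2 Hp). intros n.
    pose proof (strategy_below_le1 q n Hq). pose proof (strategy_below_le1 q (S n) Hq).
    unfold wins. rewrite Rabs_pos_eq; lra. }
  assert (Hmean : ex_series (fun n => INR n * p n)) by apply (proj2 (proj2 Hp)).
  assert (Hterms : forall n,
    v / 2 * (p n * wins q n) - INR n * p n = p n * pure_payoff v q n).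
  { intros n. unfold pure_payoff. ring. }
  split.
  - rewrite payoff_share, share_series by assumption. unfold mean.
    rewrite <- Series_scal_l, <- Series_minus
      by (try apply ex_series_scal_R; assumption).
    apply Series_ext, Hterms.
  - apply (ex_series_ext _ _ Hterms).
    apply ex_series_minus_R; [apply ex_series_scal_R|]; assumption.
Qed.

Lemma payoff_finite (v : R) (r q : nat -> R) (K : nat) :
  is_strategy r -> is_strategy q -> (forall k, (K <= k)%nat -> r k = 0) ->
  payoff v r q = below (fun n => r n * pure_payoff v q n) K.
Proof.
  intros Hr Hq Hsupp. rewrite (proj1 (payoff_series v r q Hr Hq)).
  apply Series_finite. intros k Hk. rewrite Hsupp by exact Hk. ring.
Qed.

(* The three outcomes win / lose / tie exhaust the probability:
   [Pr(X>Y) + Pr(Y>X) + Pr(X=Y) = 1], obtained from the finite identity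
   below by passing to the limit. *)
Lemma below_prod_identity (p q : nat -> R) (N : nat) :
  below (fun i => p i * below q i) N + below (fun i => q i * below p i) N
  + below (fun i => p i * q i) N = below p N * below q N.
Proof. induction N as [|N IH]; rewrite ?below_S; simpl; [ring | nra]. Qed.

Lemma prob_total (p q : nat -> R) :
  is_strategy p -> is_strategy q -> prob_gt p q + prob_gt q p + prob_eq p q = 1.
Proof.
  intros Hp Hq. unfold prob_gt, prob_eq.
  assert (Hb : forall r s, is_strategy r -> is_strategy s ->
            ex_series (fun n => r n * below s n)).
  { intros r s Hr Hs. apply (ex_series_bounded _ _ 1 Hr). intros n.
    pose proof (strategy_below_le1 s n Hs). rewrite Rabs_pos_eq; lra. }
  assert (He : ex_series (fun n => p n * q n)).
  { apply (ex_series_bounded _ _ 1 Hp). intros n.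
    pose proof (strategy_below_le1 q (S n) Hq). pose proof (strategy_below_le1 q n Hq).
    pose proof (proj1 Hq n). rewrite below_S in *. rewrite Rabs_pos_eq; lra. }
  pose proof (is_lim_seq_plus' _ _ _ _
    (is_lim_seq_plus' _ _ _ _ (Series_correct _ (Hb p q Hp Hq))
                              (Series_correct _ (Hb q p Hq Hp)))
    (Series_correct _ He)) as Hsum.
  assert (Hp1 : is_lim_seq (sum_n p) 1) by apply (proj1 (proj2 Hp)).
  assert (Hq1 : is_lim_seq (sum_n q) 1) by apply (proj1 (proj2 Hq)).
  pose proof (is_lim_seq_mult' _ _ _ _ Hp1 Hq1) as Hprod.
  apply (is_lim_seq_ext _ (fun n => sum_n p n * sum_n q n)) in Hsum.
  - apply is_lim_seq_unique in Hsum. apply is_lim_seq_unique in Hprod.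
    rewrite Hsum in Hprod. injection Hprod. lra.
  - intros n. rewrite <- !below_sum_n. apply below_prod_identity.
Qed.

Lemma share_total (p q : nat -> R) :
  is_strategy p -> is_strategy q -> share p q + share q p = 2.
Proof.
  intros Hp Hq. pose proof (prob_total p q Hp Hq).
  assert (prob_eq q p = prob_eq p q) by (apply Series_ext; intros; ring).
  unfold share. lra.
Qed.

Definition pure (n k : nat) : R := if Nat.eq_dec k n then 1 else 0.

Lemma pure_strategy (n : nat) : is_strategy (pure n).
Proof.
  apply (strategy_finite _ (S n)).
  - intros k. unfold pure. destruct (Nat.eq_dec k n); lra.
  - intros k Hk. unfold pure. destruct (Nat.eq_dec k n); [lia | reflexivity].
  - rewrite below_S, (below_ext _ (fun _ => 0 * 1)).
    + rewrite below_scal. unfold pure. destruct (Nat.eq_dec n n); [ring | lia].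
    + intros k Hk. unfold pure. destruct (Nat.eq_dec k n); [lia | ring].
Qed.

Lemma payoff_pure (v : R) (n : nat) (q : nat -> R) :
  is_strategy q -> payoff v (pure n) q = pure_payoff v q n.
Proof.
  intros Hq. rewrite (payoff_finite v (pure n) q (S n)).
  - rewrite below_S, (below_ext _ (fun k => 0 * pure_payoff v q k)).
    + rewrite below_scal. unfold pure. destruct (Nat.eq_dec n n); [ring | lia].
    + intros k Hk. unfold pure. destruct (Nat.eq_dec k n); [lia | ring].
  - apply pure_strategy.
  - exact Hq.
  - intros k Hk. unfold pure. destruct (Nat.eq_dec k n); [lia | reflexivity].
Qed.

Lemma payoff_le_of_pure_le (v : R) (p q : nat -> R) (u : R) :
  is_strategy p -> is_strategy q -> (forall n, pure_payoff v q n <= u) ->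
  payoff v p q <= u.
Proof.
  intros Hp Hq Hu. destruct (payoff_series v p q Hp Hq) as [Hpay Hex].
  assert (Hmass : ex_series (fun n => u * p n))
    by apply ex_series_scal_R, strategy_ex_series, Hp.
  assert (Hgap : 0 <= Series (fun n => u * p n - p n * pure_payoff v q n)).
  { apply Series_nonneg.
    - intros n. pose proof (proj1 Hp n). pose proof (Hu n). nra.
    - apply ex_series_minus_R; assumption. }
  rewrite Series_minus, Series_scal_l, strategy_mass in Hgap by assumption.
  lra.
Qed.

Lemma payoff_of_pure_eq (v : R) (r q : nat -> R) (u : R) (K : nat) :
  is_strategy r -> is_strategy q -> (forall k, (K <= k)%nat -> r k = 0) ->
  (forall n, (n < K)%nat -> pure_payoff v q n = u) -> payoff v r q = u.
Proof.
  intros Hr Hq Hsupp Hu. rewrite (payoff_finite v r q K Hr Hq Hsupp).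
  rewrite (below_ext _ (fun n => u * r n)), below_scal.
  - rewrite <- (Series_finite r K Hsupp), strategy_mass by exact Hr. ring.
  - intros n Hn. rewrite Hu by exact Hn. ring.
Qed.

Lemma pure_payoff_indifferent (v : R) (r q : nat -> R) (u : R) (K : nat) :
  is_strategy r -> is_strategy q -> (forall k, (K <= k)%nat -> r k = 0) ->
  (forall n, (n < K)%nat -> 0 < r n) ->
  payoff v r q = u -> (forall n, pure_payoff v q n <= u) ->
  forall n, (n < K)%nat -> pure_payoff v q n = u.
Proof.
  intros Hr Hq Hsupp Hfull Hpay Hu n Hn.
  rewrite (payoff_finite v r q K Hr Hq Hsupp) in Hpay.
  assert (Hmass : below r K = 1)
    by (rewrite <- (Series_finite r K Hsupp); apply strategy_mass, Hr).
  assert (Hzero : below (fun k => u * r k - r k * pure_payoff v q k) K = 0)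
    by (rewrite below_minus, below_scal, Hmass, Hpay; ring).
  assert (Hgap : forall k, (k < K)%nat -> 0 <= u * r k - r k * pure_payoff v q k).
  { intros k _. pose proof (proj1 Hr k). pose proof (Hu k). nra. }
  pose proof (below_zero_each _ K Hgap Hzero n Hn) as Hn0.
  pose proof (Hfull n Hn). pose proof (Hu n).
  assert (Hprod : r n * (u - pure_payoff v q n) = 0) by lra.
  destruct (Rmult_integral _ _ Hprod); lra.
Qed.

Lemma pure_payoff_step (v : R) (q : nat -> R) (n : nat) :
  pure_payoff v q (S n) - pure_payoff v q n = v / 2 * (q n + q (S n)) - 1.
Proof. unfold pure_payoff, wins. rewrite !below_S, S_INR. ring. Qed.

Definition alt (m : nat) (x y : R) (n : nat) : R :=
  if Nat.leb n (2 * m + 1) then (if Nat.even n then x else y) else 0.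

Lemma even_double (k : nat) : Nat.even (2 * k) = true.
Proof. apply Nat.even_spec. exists k. reflexivity. Qed.

Lemma even_double_succ (k : nat) : Nat.even (2 * k + 1) = false.
Proof. rewrite Nat.even_add, even_double. reflexivity. Qed.

Lemma INR_double_succ (m : nat) : INR (2 * S m) = 2 * INR m + 2.
Proof. rewrite mult_INR, (S_INR m). replace (INR 2) with 2 by (simpl; ring). ring. Qed.

Lemma alt_even (m : nat) (x y : R) (k : nat) : (k <= m)%nat -> alt m x y (2 * k) = x.
Proof.
  intros Hk. unfold alt. rewrite even_double.
  destruct (Nat.leb_spec (2 * k) (2 * m + 1)); [reflexivity | lia].
Qed.

Lemma alt_odd (m : nat) (x y : R) (k : nat) : (k <= m)%nat -> alt m x y (2 * k + 1) = y.
Proof.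
  intros Hk. unfold alt. rewrite even_double_succ.
  destruct (Nat.leb_spec (2 * k + 1) (2 * m + 1)); [reflexivity | lia].
Qed.

Lemma alt_out (m : nat) (x y : R) (n : nat) : (2 * S m <= n)%nat -> alt m x y n = 0.
Proof. intros Hn. unfold alt. destruct (Nat.leb_spec n (2 * m + 1)); [lia | reflexivity]. Qed.

Lemma below_alt_even (m : nat) (x y : R) (k : nat) :
  (k <= S m)%nat -> below (alt m x y) (2 * k) = INR k * (x + y).
Proof.
  induction k as [|k IH]; intros Hk; [simpl; ring|].
  replace (2 * S k)%nat with (S (S (2 * k))) by lia.
  rewrite !below_S, IH by lia. replace (S (2 * k)) with (2 * k + 1)%nat by lia.
  rewrite alt_even, alt_odd, S_INR by lia. ring.
Qed.

Lemma below_alt_odd (m : nat) (x y : R) (k : nat) :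
  (k <= m)%nat -> below (alt m x y) (2 * k + 1) = INR k * (x + y) + x.
Proof.
  intros Hk. replace (2 * k + 1)%nat with (S (2 * k)) by lia.
  rewrite below_S, below_alt_even, alt_even by lia. reflexivity.
Qed.

Lemma below_alt_mean (m : nat) (x y : R) (k : nat) :
  (k <= S m)%nat ->
  below (fun n => INR n * alt m x y n) (2 * k)
  = x * (INR k * (INR k - 1)) + y * (INR k * INR k).
Proof.
  induction k as [|k IH]; intros Hk; [simpl; ring|].
  replace (2 * S k)%nat with (S (S (2 * k))) by lia.
  rewrite !below_S, IH by lia. replace (S (2 * k)) with (2 * k + 1)%nat by lia.
  rewrite alt_even, alt_odd by lia.
  rewrite S_INR, plus_INR, mult_INR. simpl. ring.
Qed.

Lemma below_alt_pairs (m : nat) (x y : R) (Q : nat -> R) (k : nat) :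
  (k <= S m)%nat ->
  below (fun n => alt m x y n * (Q n + Q (S n))) (2 * k)
  = (x + y) * below Q (2 * k) + y * Q (2 * k)%nat - y * Q 0%nat.
Proof.
  induction k as [|k IH]; intros Hk; [simpl; ring|].
  replace (2 * S k)%nat with (S (S (2 * k))) by lia.
  rewrite !below_S, IH by lia. replace (S (2 * k)) with (2 * k + 1)%nat by lia.
  rewrite alt_even, alt_odd by lia. replace (S (2 * k + 1)) with (S (S (2 * k))) by lia.
  ring.
Qed.

Definition eqstrat (m : nat) (a : R) : nat -> R :=
  alt m ((1 - a) / (INR m + 1)) (a / (INR m + 1)).

Lemma mix_eqstrat (m : nat) (a : R) : mix (1 - a) (UE m) (UO (S m)) = eqstrat m a.
Proof.
  pose proof (pos_INR m) as Hm.
  extensionality n. unfold mix, UE, UO, eqstrat, alt, Nat.odd.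
  destruct (Nat.Even_or_Odd n) as [[k ->]|[k ->]].
  - rewrite even_double. cbn [negb andb]. destruct (Nat.le_gt_cases k m).
    + replace (Nat.leb (2 * k) (2 * m)) with true by (symmetry; apply Nat.leb_le; lia).
      replace (Nat.leb (2 * k) (2 * m + 1)) with true by (symmetry; apply Nat.leb_le; lia).
      rewrite S_INR. field. lra.
    + replace (Nat.leb (2 * k) (2 * m)) with false by (symmetry; apply Nat.leb_gt; lia).
      replace (Nat.leb (2 * k) (2 * m + 1)) with false by (symmetry; apply Nat.leb_gt; lia).
      ring.
  - rewrite even_double_succ. cbn [negb andb]. destruct (Nat.le_gt_cases k m).
    + replace (Nat.ltb (2 * k + 1) (2 * S m)) with true by (symmetry; apply Nat.ltb_lt; lia).
      replace (Nat.leb (2 * k + 1) (2 * m + 1)) with true by (symmetry; apply Nat.leb_le; lia).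
      rewrite S_INR. field. lra.
    + replace (Nat.ltb (2 * k + 1) (2 * S m)) with false by (symmetry; apply Nat.ltb_ge; lia).
      replace (Nat.leb (2 * k + 1) (2 * m + 1)) with false by (symmetry; apply Nat.leb_gt; lia).
      ring.
Qed.

Lemma eqstrat_out (m : nat) (a : R) (n : nat) : (2 * S m <= n)%nat -> eqstrat m a n = 0.
Proof. apply alt_out. Qed.

Lemma eqstrat_nonneg (m : nat) (a : R) (n : nat) : 0 <= a <= 1 -> 0 <= eqstrat m a n.
Proof.
  intros Ha. pose proof (pos_INR m).
  assert (0 < / (INR m + 1)) by (apply Rinv_0_lt_compat; lra).
  unfold eqstrat, alt, Rdiv.
  destruct (Nat.leb n (2 * m + 1)); [destruct (Nat.even n)|]; nra.
Qed.

Lemma eqstrat_pos (m : nat) (a : R) (n : nat) :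
  0 < a < 1 -> (n < 2 * S m)%nat -> 0 < eqstrat m a n.
Proof.
  intros Ha Hn. pose proof (pos_INR m). unfold eqstrat.
  destruct (Nat.Even_or_Odd n) as [[k ->]|[k ->]].
  - rewrite alt_even by lia. apply Rdiv_lt_0_compat; lra.
  - rewrite alt_odd by lia. apply Rdiv_lt_0_compat; lra.
Qed.

Lemma eqstrat_mass (m : nat) (a : R) : below (eqstrat m a) (2 * S m) = 1.
Proof.
  pose proof (pos_INR m). unfold eqstrat. rewrite below_alt_even, S_INR by lia.
  field. lra.
Qed.

Lemma eqstrat_strategy (m : nat) (a : R) : 0 <= a <= 1 -> is_strategy (eqstrat m a).
Proof.
  intros Ha. apply (strategy_finite _ (2 * S m)).
  - intros n. apply eqstrat_nonneg, Ha.
  - apply eqstrat_out.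
  - apply eqstrat_mass.
Qed.

Lemma eqstrat_mean (m : nat) (a : R) : mean (eqstrat m a) = INR m + a.
Proof.
  pose proof (pos_INR m). unfold mean.
  rewrite (Series_finite _ (2 * S m)).
  - unfold eqstrat. rewrite below_alt_mean, S_INR by lia. field. lra.
  - intros k Hk. rewrite eqstrat_out by exact Hk. ring.
Qed.

(* Summation by parts for the distribution function of [q]. *)
Lemma below_below (q : nat -> R) (L : nat) :
  below (below q) L + below (fun k => INR k * q k) L = (INR L - 1) * below q L.
Proof.
  induction L as [|L IH]; [simpl; ring|].
  rewrite !below_S, S_INR. nra.
Qed.

(* Bids of at least [L] contribute at least [L] times their mass to the mean. *)
Lemma mean_tail_bound (q : nat -> R) (L : nat) :
  is_strategy q -> below (fun k => INR k * q k) L + INR L * (1 - below q L) <= mean q.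
Proof.
  intros Hq. pose proof (proj1 Hq) as Hpos.
  assert (Hex : ex_series (fun n => INR n * q n)) by apply (proj2 (proj2 Hq)).
  pose proof (Series_split q L (strategy_ex_series q Hq)) as Hmass.
  rewrite strategy_mass in Hmass by exact Hq.
  assert (Htail : INR L * Series (fun k => q (L + k)%nat)
                  <= Series (fun k => INR (L + k) * q (L + k)%nat)).
  { rewrite <- Series_scal_l. apply Series_le.
    - intros n. pose proof (pos_INR L). pose proof (Hpos (L + n)%nat).
      split; [nra|]. apply Rmult_le_compat_r; [lra | apply le_INR; lia].
    - apply (ex_series_incr_n (fun n => INR n * q n) L), Hex. }
  unfold mean. rewrite (Series_split _ L Hex). cbv beta. nra.
Qed.

Lemma share_eqstrat (m : nat) (a : R) (q : nat -> R) :
  0 <= a <= 1 -> is_strategy q ->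
  share (eqstrat m a) q = below (fun n => eqstrat m a n * wins q n) (2 * S m).
Proof.
  intros Ha Hq. rewrite share_series by (try apply eqstrat_strategy; assumption).
  apply Series_finite. intros k Hk. rewrite eqstrat_out by exact Hk. ring.
Qed.

Lemma share_eqstrat_lower (m : nat) (a : R) (q : nat -> R) :
  0 <= a <= 1 -> is_strategy q ->
  2 * INR m + 1 + a - mean q + (1 - a) * (1 - below q (2 * S m))
  <= (INR m + 1) * share (eqstrat m a) q.
Proof.
  intros Ha Hq. pose proof (pos_INR m).
  rewrite share_eqstrat by assumption. unfold eqstrat, wins.
  rewrite (below_alt_pairs m _ _ (below q) (S m)) by lia.
  pose proof (below_below q (2 * S m)) as Habel.
  pose proof (mean_tail_bound q (2 * S m) Hq) as Htail.
  rewrite INR_double_succ in Habel, Htail. simpl (below q 0) in *.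
  set (B := below q (2 * S m)) in *. set (S2 := below (below q) (2 * S m)) in *.
  replace ((INR m + 1) * (((1 - a) / (INR m + 1) + a / (INR m + 1)) * S2
            + a / (INR m + 1) * B - a / (INR m + 1) * 0))
    with (S2 + a * B) by (field; lra).
  nra.
Qed.

Lemma pure_payoff_against_eqstrat (m : nat) (b : R) (n : nat) :
  0 <= b <= 1 ->
  pure_payoff (2 * (INR m + 1)) (eqstrat m b) n <= 1 - b /\
  ((n < 2 * S m)%nat -> pure_payoff (2 * (INR m + 1)) (eqstrat m b) n = 1 - b).
Proof.
  intros Hb. pose proof (pos_INR m). unfold pure_payoff, wins.
  replace (2 * (INR m + 1) / 2) with (INR m + 1) by field.
  destruct (Nat.le_gt_cases (2 * S m) n) as [Hn|Hn].
  - rewrite (below_stable _ (2 * S m) n), (below_stable _ (2 * S m) (S n)), eqstrat_mass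
      by (try apply eqstrat_out; lia).
    pose proof (le_INR _ _ Hn) as HnR. rewrite INR_double_succ in HnR.
    split; [lra | intros; lia].
  - enough (Heq : (INR m + 1) * (below (eqstrat m b) n + below (eqstrat m b) (S n))
                  - INR n = 1 - b) by (split; [right|intros _]; exact Heq).
    unfold eqstrat. destruct (Nat.Even_or_Odd n) as [[k ->]|[k ->]].
    + replace (S (2 * k)) with (2 * k + 1)%nat by lia.
      rewrite below_alt_even, below_alt_odd by lia.
      rewrite mult_INR. simpl (INR 2). field. lra.
    + replace (S (2 * k + 1)) with (2 * S k)%nat by lia.
      rewrite below_alt_even, below_alt_odd by lia.
      rewrite plus_INR, mult_INR, S_INR. simpl (INR 2). simpl (INR 1). field. lra.
Qed.

Lemma eqstrat_value (m : nat) (a b : R) :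
  0 <= a <= 1 -> 0 <= b <= 1 ->
  payoff (2 * (INR m + 1)) (eqstrat m a) (eqstrat m b) = 1 - b.
Proof.
  intros Ha Hb. apply (payoff_of_pure_eq _ _ _ _ (2 * S m)).
  - apply eqstrat_strategy, Ha.
  - apply eqstrat_strategy, Hb.
  - apply eqstrat_out.
  - intros n Hn. apply (pure_payoff_against_eqstrat m b n Hb), Hn.
Qed.

Lemma eqstrat_nash (m : nat) (a b : R) :
  0 <= a <= 1 -> 0 <= b <= 1 ->
  nash (2 * (INR m + 1)) (2 * (INR m + 1)) (eqstrat m a) (eqstrat m b).
Proof.
  intros Ha Hb. pose proof (eqstrat_strategy m a Ha). pose proof (eqstrat_strategy m b Hb).
  split; [assumption|]. split; [assumption|]. split.
  - intros p' Hp'. rewrite eqstrat_value by assumption.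
    apply payoff_le_of_pure_le; try assumption.
    intros n. apply (pure_payoff_against_eqstrat m b n Hb).
  - intros q' Hq'. rewrite eqstrat_value by assumption.
    apply payoff_le_of_pure_le; try assumption.
    intros n. apply (pure_payoff_against_eqstrat m a n Ha).
Qed.

(* Step 1.  In an equilibrium with means [m + alpha] and [m + beta], each
   player could deviate to the candidate strategy with the same mean; by
   [share_total] the two deviations together cannot gain, while by
   [share_eqstrat_lower] together they gain as soon as some mass lies above
   [2m+1]. *)
Lemma equilibrium_saturation (v1 v2 : R) (m : nat) (alpha beta : R) (p q : nat -> R) :
  0 < v1 -> 0 < v2 -> 0 <= alpha < 1 -> 0 <= beta < 1 ->
  nash v1 v2 p q -> mean p = INR m + alpha -> mean q = INR m + beta ->
  below p (2 * S m) = 1 /\ below q (2 * S m) = 1 /\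
  payoff v1 (eqstrat m alpha) q = payoff v1 p q /\
  payoff v2 (eqstrat m beta) p = payoff v2 q p.
Proof.
  intros Hv1 Hv2 Ha Hb [Hp [Hq [Nash1 Nash2]]] Hmp Hmq.
  pose proof (pos_INR m).
  pose proof (Nash1 _ (eqstrat_strategy m alpha ltac:(lra))) as Dev1.
  pose proof (Nash2 _ (eqstrat_strategy m beta ltac:(lra))) as Dev2.
  rewrite !payoff_share, eqstrat_mean, Hmp in Dev1.
  rewrite !payoff_share, eqstrat_mean, Hmq in Dev2.
  set (s1 := share (eqstrat m alpha) q) in *. set (s2 := share (eqstrat m beta) p) in *.
  assert (Hs1 : s1 <= share p q) by (apply (Rmult_le_reg_l (v1 / 2)); lra).
  assert (Hs2 : s2 <= share q p) by (apply (Rmult_le_reg_l (v2 / 2)); lra).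
  pose proof (share_total p q Hp Hq) as Htotal.
  pose proof (share_eqstrat_lower m alpha q ltac:(lra) Hq) as Low1.
  pose proof (share_eqstrat_lower m beta p ltac:(lra) Hp) as Low2.
  fold s1 in Low1. fold s2 in Low2. rewrite Hmq in Low1. rewrite Hmp in Low2.
  pose proof (strategy_below_le1 q (2 * S m) Hq).
  pose proof (strategy_below_le1 p (2 * S m) Hp).
  assert (Hsum : (INR m + 1) * (s1 + s2) <= (INR m + 1) * 2)
    by (apply Rmult_le_compat_l; lra).
  assert (Tail1 : (1 - alpha) * (1 - below q (2 * S m)) = 0) by nra.
  assert (Tail2 : (1 - beta) * (1 - below p (2 * S m)) = 0) by nra.
  assert (Hfull : 2 <= s1 + s2) by (apply (Rmult_le_reg_l (INR m + 1)); lra).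
  assert (Eq1 : s1 = share p q) by lra.
  assert (Eq2 : s2 = share q p) by lra.
  split; [destruct (Rmult_integral _ _ Tail2); lra|].
  split; [destruct (Rmult_integral _ _ Tail1); lra|].
  rewrite !payoff_share, !eqstrat_mean, Hmp, Hmq. fold s1 s2. rewrite Eq1, Eq2.
  split; reflexivity.
Qed.

Lemma alt_of_pairs (m : nat) (s : R) (q : nat -> R) :
  (forall n, (n < 2 * m + 1)%nat -> q n + q (S n) = s) ->
  (forall k, (2 * S m <= k)%nat -> q k = 0) ->
  q = alt m (q 0%nat) (s - q 0%nat).
Proof.
  intros Hpair Hsupp.
  assert (Heven : forall k, (k <= m)%nat -> q (2 * k)%nat = q 0%nat).
  { induction k as [|k IH]; intros Hk; [reflexivity|].
    replace (2 * S k)%nat with (S (S (2 * k))) by lia.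
    pose proof (Hpair (2 * k)%nat ltac:(lia)). pose proof (Hpair (S (2 * k)) ltac:(lia)).
    rewrite <- IH by lia. lra. }
  extensionality n. destruct (Nat.le_gt_cases (2 * S m) n).
  - rewrite Hsupp, alt_out by lia. reflexivity.
  - destruct (Nat.Even_or_Odd n) as [[k ->]|[k ->]].
    + rewrite alt_even, Heven by lia. reflexivity.
    + rewrite alt_odd by lia. pose proof (Hpair (2 * k)%nat ltac:(lia)) as Hk.
      rewrite Heven in Hk by lia. replace (2 * k + 1)%nat with (S (2 * k)) by lia. lra.
Qed.

(* Step 2.  If a strategy [q] supported in [0, 2m+1] leaves the opponent
   indifferent among all bids of [0, 2m+1], consecutive masses add up to
   [2/v] ([pure_payoff_step]); total mass 1 forces [v/2 = m+1] and the mean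
   [m + b] then pins [q] down to [eqstrat m b]. *)
Lemma indifferent_opponent (v : R) (m : nat) (b u : R) (q : nat -> R) :
  0 < v -> is_strategy q -> mean q = INR m + b ->
  (forall k, (2 * S m <= k)%nat -> q k = 0) ->
  (forall n, (n < 2 * S m)%nat -> pure_payoff v q n = u) ->
  v / 2 = INR m + 1 /\ q = eqstrat m b.
Proof.
  intros Hv Hq Hmean Hsupp Hflat. pose proof (pos_INR m).
  assert (Hpair : forall n, (n < 2 * m + 1)%nat -> q n + q (S n) = 2 / v).
  { intros n Hn. pose proof (pure_payoff_step v q n) as Hstep.
    rewrite !Hflat in Hstep by lia.
    apply (Rmult_eq_reg_l (v / 2)); [|lra].
    replace (v / 2 * (2 / v)) with 1 by (field; lra). lra. }
  pose proof (alt_of_pairs m (2 / v) q Hpair Hsupp) as Halt.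
  set (c := q 0%nat) in Halt.
  assert (Hmass : below q (2 * S m) = 1)
    by (rewrite <- (Series_finite q _ Hsupp); apply strategy_mass, Hq).
  rewrite Halt, below_alt_even, S_INR in Hmass by lia.
  assert (Htwo : 2 / v = 1 / (INR m + 1))
    by (apply (Rmult_eq_reg_l (INR m + 1)); [transitivity 1; [lra | field] | ]; lra).
  assert (Hv2 : v / 2 = INR m + 1).
  { replace (v / 2) with (/ (2 / v)) by (field; lra). rewrite Htwo. field. lra. }
  unfold mean in Hmean.
  rewrite Halt, (Series_finite _ (2 * S m)), below_alt_mean, S_INR, Htwo in Hmean
    by (lia || (intros k Hk; rewrite alt_out by exact Hk; ring)).
  replace ((1 / (INR m + 1) - c) * ((INR m + 1) * (INR m + 1)))
    with (INR m + 1 - c * ((INR m + 1) * (INR m + 1))) in Hmean by (field; lra).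
  assert (Hc : c = (1 - b) / (INR m + 1)).
  { apply (Rmult_eq_reg_l (INR m + 1)); [|lra].
    replace ((INR m + 1) * ((1 - b) / (INR m + 1))) with (1 - b) by (field; lra). nra. }
  split; [exact Hv2|]. rewrite Halt, Htwo, Hc. unfold eqstrat. f_equal. field. lra.
Qed.

Lemma nash_only_if (v1 v2 : R) (m : nat) (alpha beta : R) (p q : nat -> R) :
  0 < v1 -> 0 < v2 -> 0 < alpha < 1 -> 0 < beta < 1 ->
  nash v1 v2 p q -> mean p = INR m + alpha -> mean q = INR m + beta ->
  v1 / 2 = INR m + 1 /\ v2 / 2 = INR m + 1 /\ p = eqstrat m alpha /\ q = eqstrat m beta.
Proof.
  intros Hv1 Hv2 Ha Hb Hnash Hmp Hmq.
  destruct (equilibrium_saturation v1 v2 m alpha beta p q) as [Hp1 [Hq1 [Pay1 Pay2]]];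
    try assumption; try lra.
  destruct Hnash as [Hp [Hq [Nash1 Nash2]]].
  (* each candidate is a best response with full support on [0, 2m+1] *)
  assert (Flat1 : forall n, (n < 2 * S m)%nat -> pure_payoff v1 q n = payoff v1 p q).
  { apply (pure_payoff_indifferent v1 (eqstrat m alpha) q); try assumption.
    - apply eqstrat_strategy. lra.
    - apply eqstrat_out.
    - intros n Hn. apply eqstrat_pos; assumption.
    - intros n. rewrite <- payoff_pure by exact Hq. apply Nash1, pure_strategy. }
  assert (Flat2 : forall n, (n < 2 * S m)%nat -> pure_payoff v2 p n = payoff v2 q p).
  { apply (pure_payoff_indifferent v2 (eqstrat m beta) p); try assumption.
    - apply eqstrat_strategy. lra.
    - apply eqstrat_out.
    - intros n Hn. apply eqstrat_pos; assumption.
    - intros n. rewrite <- payoff_pure by exact Hp. apply Nash2, pure_strategy. }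
  destruct (indifferent_opponent v1 m beta _ q Hv1 Hq Hmq
              (strategy_tail_zero q _ Hq Hq1) Flat1) as [Hv1m Hqe].
  destruct (indifferent_opponent v2 m alpha _ p Hv2 Hp Hmp
              (strategy_tail_zero p _ Hp Hp1) Flat2) as [Hv2m Hpe].
  auto.
Qed.

Theorem proposition3 (v1 v2 : R) (m : nat) (alpha beta : R) (p q : nat -> R) :
  v2 <= v1 -> 0 < v2 ->
  0 < beta -> beta <= alpha -> alpha < 1 ->
  is_strategy p -> is_strategy q ->
  mean p = INR m + alpha -> mean q = INR m + beta ->
  (nash v1 v2 p q <->
     (v1 / 2 = INR m + 1 /\ v2 / 2 = INR m + 1 /\
      p = mix (1 - alpha) (UE m) (UO (S m)) /\
      q = mix (1 - beta) (UE m) (UO (S m)))) /\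
  (nash v1 v2 p q ->
     payoff v1 p q = 1 - beta /\ payoff v2 q p = 1 - alpha).
Proof.
  intros H12 Hv2 Hb Hba Ha _ _ Hmp Hmq.
  rewrite !mix_eqstrat.
  assert (Hv : forall v, v / 2 = INR m + 1 -> v = 2 * (INR m + 1)) by (intros; lra).
  split; [split|].
  - intros Hnash. apply (nash_only_if v1 v2 m alpha beta); auto; lra.
  - intros (Hv1 & Hv2' & -> & ->). rewrite (Hv v1 Hv1), (Hv v2 Hv2').
    apply eqstrat_nash; lra.
  - intros Hnash.
    destruct (nash_only_if v1 v2 m alpha beta p q) as (Hv1 & Hv2' & -> & ->); auto; try lra.
    rewrite (Hv v1 Hv1), (Hv v2 Hv2'). split; apply eqstrat_value; lra.
Qed.
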